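(* Let $s\in(0,1]$, $p>1$ and $q=\frac{p}{p-1}$. Let $I\subseteq\mathbb{R}$ be an interval, $a,b\in I$ with $a<b$, and let $f:I\to\mathbb{R}$ be differentiable on $I^\circ$ with $f'\in L^1[a,b]$, and suppose $|f'|$ is $s$-convex on $[a,b]$ in the sense that $|f'(tx+(1-t)y)|\le t^{s}|f'(x)|+(1-t^{s})|f'(y)|$ for all $x,y\in[a,b]$, $t\in[0,1]$. Then for every partition $D=\{a=x_0<x_1<\dots<x_n=b\}$ of $[a,b]$, the trapezoidal error $$R(f,D)=\int_a^b f(x)\,dx-\sum_{k=0}^{n-1}\frac{f(x_k)+f(x_{k+1})}{2}(x_{k+1}-x_k)$$ satisfies $$|R(f,D)|\le \frac{1}{2^{1/p}}\left(\frac{s\cdot 2^s+1}{2^s(s+1)(s+2)}\right)^{1/q}\sum_{k=0}^{n-1}\frac{(x_{k+1}-x_k)^2}{2}\bigl[|f'(x_k)|+|f'(x_{k+1})|\bigr].$$ *)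

From HB Require Import structures.
From mathcomp Require Import all_boot all_order all_algebra.
From mathcomp Require Import all_classical all_reals all_analysis.
Set Implicit Arguments. Unset Strict Implicit. Unset Printing Implicit Defensive.
Import Order.TTheory GRing.Theory Num.Theory.
Local Open Scope classical_set_scope.
Local Open Scope ring_scope.

Definition s_convex_on {R : realType} (s a b : R) (g : R -> R) : Prop :=
  forall x y t, x \in `[a, b] -> y \in `[a, b] -> t \in `[0, 1] ->
    g (t * x + (1 - t) * y) <= t `^ s * g x + (1 - t `^ s) * g y.

Definition is_partition {R : realType} (a b : R) (n : nat) (x : nat -> R) : Prop :=
  x 0%N = a /\ x n = b /\ (forall k, (k < n)%N -> x k < x k.+1).

Definition trap_error {R : realType} (f : R -> R) (a b : R) (n : nat) (x : nat -> R) : R :=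
  (\int[@lebesgue_measure R]_(t in `[a, b]) f t)
  - \sum_(k < n) (f (x k) + f (x k.+1)) / 2 * (x k.+1 - x k).

From HB Require Import structures.
From mathcomp Require Import all_boot all_order all_algebra.
From mathcomp Require Import all_classical all_reals all_analysis.
From mathcomp Require Import ring lra.
Import Order.TTheory GRing.Theory Num.Theory.
Import numFieldNormedType.Exports.
Local Open Scope classical_set_scope.
Local Open Scope ring_scope.

(* On a segment [u, v] of the partition, s-convexity bounds |f'(y)| by
   |f'(v)| + (|f'(u)| - |f'(v)|) t^s with t = (v - y) / (v - u).  Comparing
   derivatives (mean value theorem) bounds |f y - f u| and |f y - f v| by the
   increments of an explicit antiderivative of that bound, and comparing once
   more bounds the two halves of the trapezoid error, split at the midpoint.
   This gives the segment error bound (v - u)^2/2 (K |f'(u)| + (1/2 - K) |f'(v)|)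
   with K = (s 2^s + 1) / (2^s (s + 1) (s + 2)) in [1/4, 1/2], and
   K <= 2^(-1/p) K^(1/q) because (2 K)^(1/p) <= 1; summing over the segments
   gives the claim. *)

Section Preliminaries.
Context {R : realType}.
Implicit Types (c v h r y : R) (A : set R).

Lemma is_derive_affine_powR v h r y : 0 < h -> y < v ->
  is_derive y 1 (fun y => ((v - y) / h) `^ r)
    (- (r * ((v - y) / h) `^ (r - 1)) / h).
Proof.
move=> h0 yv.
have dlin : is_derive y 1 (fun y => (v - y) / h) (- h^-1).
  have -> : (fun y => (v - y) / h) = (fun y => h^-1 *: (cst v y - id y)).
    by apply/funext => z /=; rewrite mulrC.
  by apply: is_derive_eq; rewrite sub0r scalerN /GRing.scale /= mulr1.
have w0 : 0 < (v - y) / h by rewrite divr_gt0 // subr_gt0.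
have dpow : derivable (@powR R ^~ r) ((v - y) / h) 1.
  by apply: (@derivable_powR R 1 r); rewrite in_itv /= w0.
have dlin' : derivable (fun y => (v - y) / h) y 1 by case: dlin.
have -> : (fun y => ((v - y) / h) `^ r) = (@powR R ^~ r) \o (fun y => (v - y) / h) by [].
split.
  by apply/derivable1_diffP; apply: differentiable_comp; apply/derivable1_diffP.
rewrite -derive1E derive1_comp // powR_derive1 ?in_itv /= ?andbT //.
by rewrite derive1E (@derive_val _ _ _ _ _ _ _ dlin) mulrN mulNr.
Qed.

Lemma affine_powR_continuous c v h r : 0 < h -> 0 < r -> c < v ->
  {within `[c, v], continuous (fun y => ((v - y) / h) `^ r)}.
Proof.
move=> h0 r0 cv.
have cont_lt y : y < v -> {for y, continuous (fun y => ((v - y) / h) `^ r)}.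
  move=> yv; have [dw _] := is_derive_affine_powR v h r y h0 yv.
  exact/differentiable_continuous/derivable1_diffP.
apply/continuous_within_itvP => //; split.
- by move=> y; rewrite in_itv /= => /andP[_ yv]; exact: cont_lt.
- exact/cvg_at_right_filter/cont_lt.
rewrite subrr mul0r powR0 ?gt_eqF //.
have -> : (fun y => ((v - y) / h) `^ r) = (@powR R ^~ r) \o (fun y => (v - y) / h) by [].
apply: (@decreasing_cvg_at_left_comp R (fun y => (v - y) / h) (@powR R ^~ r)
  (BLeft c) v 0); first by rewrite bnd_simp.
- by move=> x y _ _ xy; rewrite ltr_pM2r ?invr_gt0 //; lra.
- apply: cvg_at_left_filter.
  have : {for v, continuous (fun y => (v - y) / h)}.
    by apply/differentiable_continuous/derivable1_diffP; apply: ex_derive.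
  by [].
- by rewrite subrr mul0r; exact: powR_cvg0.
Qed.

Lemma within_continuousDZ A (g w : R -> R) (k : R) :
  {within A, continuous g} -> {within A, continuous w} ->
  {within A, continuous (fun y => g y + k * w y)}.
Proof.
move=> cg cw x.
exact: (continuousD (cg x) (@continuousZl_tmp _ _ _ _ k x (cw x))).
Qed.

(* Comparing [G + F] and [G - F] with the mean value theorem. *)
Lemma ler_norm_increment {F G dF dG : R -> R} {c d : R} : c <= d ->
  (forall y, y \in `]c, d[ -> is_derive y 1 F (dF y)) ->
  (forall y, y \in `]c, d[ -> is_derive y 1 G (dG y)) ->
  (forall y, y \in `]c, d[ -> `|dF y| <= dG y) ->
  {within `[c, d], continuous F} -> {within `[c, d], continuous G} ->
  `|F d - F c| <= G d - G c.
Proof.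
move=> cd dF' dG' dFG cF cG.
case: (ltgtP c d) cd => // [cd _|<- _]; last by rewrite !subrr normr0.
have [z zcd /= Ez] := MVT cd (fun y hy => is_deriveB (dG' y hy) (dF' y hy))
  (fun x => continuousB (cG x) (cF x)).
have [w wcd /= Ew] := MVT cd (fun y hy => is_deriveD (dG' y hy) (dF' y hy))
  (fun x => continuousD (cG x) (cF x)).
have := dFG _ zcd; have := dFG _ wcd.
rewrite !ler_norml => /andP[w1 w2] /andP[z1 z2].
have dc : 0 < d - c by rewrite subr_gt0.
have Gw : 0 <= (dG w + dF w) * (d - c) by rewrite mulr_ge0 ?(ltW dc) //; lra.
have Gz : 0 <= (dG z - dF z) * (d - c) by rewrite mulr_ge0 ?(ltW dc) //; lra.
have Ez' : G d - F d - (G c - F c) = (dG z - dF z) * (d - c) := Ez.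
have Ew' : G d + F d - (G c + F c) = (dG w + dF w) * (d - c) := Ew.
apply/andP; split; lra.
Qed.

Lemma is_interval_interior {I : set R} : is_interval I -> is_interval I°.
Proof.
move=> Ii a b /nbhs_ballP[ea /= ea0 Ba] /nbhs_ballP[eb /= eb0 Bb] y /andP[ay yb].
have Ia : I (a - ea / 2).
  by apply: Ba; rewrite /ball /= opprB addrC subrK ger0_norm; lra.
have Ib : I (b + eb / 2).
  by apply: Bb; rewrite /ball /= opprD addNKr normrN ger0_norm; lra.
have m0 : 0 < Num.min ea eb by rewrite lt_min ea0 eb0.
have m1 : Num.min ea eb <= ea by rewrite ge_min lexx.
have m2 : Num.min ea eb <= eb by rewrite ge_min lexx orbT.
apply/nbhs_ballP; exists (Num.min ea eb / 2); first by rewrite /= divr_gt0.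
move=> z; rewrite /ball /= ltr_norml => /andP[z1 z2].
by apply: (Ii _ _ Ia Ib); apply/andP; split; lra.
Qed.

Lemma is_derive_parameterized_integral (f : R -> R) (a b y : R) :
  a < y -> y < b -> lebesgue_measure.-integrable `[a, b] (EFin \o f) ->
  {for y, continuous f} ->
  is_derive y 1 (fun z => parameterized_integral lebesgue_measure a z f) (f y).
Proof.
move=> ay yb fint fy.
have [dF F'] := continuous_FTC1_closed yb fint ay fy.
by split => //; rewrite -derive1E.
Qed.

End Preliminaries.

Section TrapezoidConstant.
Context {R : realType}.
Implicit Types s e k : R.

(* Convexity of [expR] between [0] and [ln 2]. *)
Lemma powR2_le1D s : 0 <= s -> s <= 1 -> 2 `^ s <= 1 + s.
Proof.
move=> s0 s1.
have := @convex_expR R (Itv01 s0 s1) (ln 2) 0.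
rewrite !convRE /= expR0 lnK ?posrE // mulr0 addr0 /powR ifF ?pnatr_eq0 // mulrC.
by move=> /le_trans; apply; rewrite /unstable.onem; lra.
Qed.

Definition trap_const s := (s * 2 `^ s + 1) / (2 `^ s * (s + 1) * (s + 2)).

Lemma trap_const_bounds s : 0 < s -> s <= 1 ->
  4^-1 <= trap_const s <= 2^-1.
Proof.
move=> s0 s1; rewrite /trap_const.
have X1 : 1 <= 2 `^ s.
  by rewrite -[X in X <= _](powRr0 2) ler_powR ?ler1n ?(ltW s0).
have X2 := powR2_le1D s (ltW s0) s1.
have D : 0 < 2 `^ s * (s + 1) * (s + 2) by rewrite !mulr_gt0 //; lra.
apply/andP; split.
- rewrite ler_pdivlMr // mulrC ler_pdivrMr ?ltr0n //.
  have : 0 <= s * s * s by rewrite !mulr_ge0 // ltW.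
  nra.
- by rewrite ler_pdivrMr //; nra.
Qed.

Lemma ler_half_powR k e : 0 < k -> k <= 2^-1 -> 0 <= e ->
  k <= (2 `^ e)^-1 * k `^ (1 - e).
Proof.
move=> k0 k2 e0; have k0' := ltW k0.
rewrite powRB ?(gt_eqF k0) ?implybT // powRr1 // mulrC -mulrA -invfM -powRM //.
have k2e : (k * 2) `^ e <= 1.
  apply: (@le_trans _ _ (1 `^ e)); last by rewrite powR1.
  apply: ge0_ler_powR; rewrite ?nnegrE ?mulr_ge0 //.
  by rewrite -ler_pdivlMr // div1r.
have k2e0 : 0 < (k * 2) `^ e by rewrite powR_gt0 // mulr_gt0.
by rewrite ler_pMr // invf_ge1.
Qed.

Lemma trap_const_le_coef s p q : 0 < s -> s <= 1 -> 1 < p -> q = p / (p - 1) ->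
  trap_const s <= (2 `^ (p^-1))^-1 * trap_const s `^ (q^-1).
Proof.
move=> s0 s1 p1 ->.
have /andP[K4 K2] := trap_const_bounds s s0 s1.
have -> : (p / (p - 1))^-1 = 1 - p^-1 by rewrite invf_div; field; apply/eqP; lra.
apply: ler_half_powR => //; last by rewrite invr_ge0; lra.
by apply: lt_le_trans K4; rewrite invr_gt0.
Qed.

End TrapezoidConstant.

Section TrapezoidSegment.
Context {R : realType} {s u v : R} {f df H : R -> R}.
Hypotheses (s_gt0 : 0 < s) (s_le1 : s <= 1) (uv : u < v).
Hypothesis f_derive : forall y, u <= y -> y <= v -> is_derive y 1 f (df y).
Hypothesis H_derive : forall y, u < y -> y < v -> is_derive y 1 H (f y).
Hypothesis H_cont : {within `[u, v], continuous H}.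
Hypothesis df_sconvex : forall t, 0 <= t -> t <= 1 ->
  `|df (t * u + (1 - t) * v)| <= t `^ s * `|df u| + (1 - t `^ s) * `|df v|.

(* [y = t u + (1 - t) v] for [t = (v - y) / (v - u)]. *)
Definition weight r y := ((v - y) / (v - u)) `^ r.

Definition dmajorant y := `|df v| + (`|df u| - `|df v|) * weight s y.

Definition majorant_coef := (`|df u| - `|df v|) * ((v - u) / (s + 1)).

Definition majorant y := `|df v| * y - majorant_coef * weight (s + 1) y.

(* [lra] ignores section hypotheses, hence local copies such as [uv'] below. *)
Let h_gt0 : 0 < v - u. Proof. by rewrite subr_gt0. Qed.
Let s1_gt0 : 0 < s + 1. Proof. by rewrite addr_gt0. Qed.
Let s2_gt0 : 0 < s + 2. Proof. by rewrite addr_gt0. Qed.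

Lemma weight_continuous r c : 0 < r -> c < v ->
  {within `[c, v], continuous weight r}.
Proof. exact: affine_powR_continuous. Qed.

Lemma weight_left r : weight r u = 1.
Proof. by rewrite /weight divff ?gt_eqF // powR1. Qed.

Lemma weight_right r : 0 < r -> weight r v = 0.
Proof. by move=> r0; rewrite /weight subrr mul0r powR0 ?gt_eqF. Qed.

Lemma abs_df_le_dmajorant y : u < y -> y < v -> `|df y| <= dmajorant y.
Proof.
move=> uy yv.
have t0 : 0 <= (v - y) / (v - u) by rewrite divr_ge0 // subr_ge0 ltW.
have t1 : (v - y) / (v - u) <= 1 by rewrite ler_pdivrMr // mul1r; lra.
have := df_sconvex _ t0 t1.
have -> : (v - y) / (v - u) * u + (1 - (v - y) / (v - u)) * v = y.
  by field; rewrite subr_eq0 gt_eqF.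
by move=> /le_trans; apply; rewrite /dmajorant /weight; lra.
Qed.

Lemma is_derive_majorant y : y < v -> is_derive y 1 majorant (dmajorant y).
Proof.
move=> yv; have dw := is_derive_affine_powR v (v - u) (s + 1) y h_gt0 yv.
rewrite /majorant /dmajorant /weight; apply: is_derive_eq.
rewrite /GRing.scale /= addrK /majorant_coef; field.
by rewrite (gt_eqF h_gt0) (gt_eqF s1_gt0).
Qed.

Lemma majorant_continuous : {within `[u, v], continuous majorant}.
Proof.
have -> : majorant = fun y => `|df v| * y + - majorant_coef * weight (s + 1) y.
  by apply/funext => y; rewrite /majorant mulNr.
apply: within_continuousDZ.
  apply: continuous_subspaceT => y.
  by apply/differentiable_continuous/derivable1_diffP; apply: ex_derive.
exact: weight_continuous.
Qed.

Let f_cont c d : u <= c -> d <= v -> {within `[c, d], continuous f}.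
Proof.
move=> uc dv; apply: derivable_within_continuous => y.
rewrite in_itv /= => /andP[cy yd].
by case: (f_derive y (le_trans uc cy) (le_trans yd dv)).
Qed.

Let majorant_cont c d : u <= c -> d <= v ->
  {within `[c, d], continuous majorant}.
Proof.
move=> uc dv; apply: continuous_subspaceW majorant_continuous.
exact: subset_itv.
Qed.

Lemma f_increment_left y : u <= y -> y <= v ->
  `|f y - f u| <= majorant y - majorant u.
Proof.
move=> uy yv; have uv' := uv.
apply: (@ler_norm_increment _ f majorant df dmajorant u y uy).
- by move=> z; rewrite in_itv /= => /andP[uz zy]; apply: f_derive; lra.
- by move=> z; rewrite in_itv /= => /andP[uz zy]; apply: is_derive_majorant; lra.
- by move=> z; rewrite in_itv /= => /andP[uz zy]; apply: abs_df_le_dmajorant; lra.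
- exact: f_cont.
- exact: majorant_cont.
Qed.

Lemma f_increment_right y : u <= y -> y <= v ->
  `|f y - f v| <= majorant v - majorant y.
Proof.
move=> uy yv; have uv' := uv; rewrite distrC.
apply: (@ler_norm_increment _ f majorant df dmajorant y v yv).
- by move=> z; rewrite in_itv /= => /andP[uz zy]; apply: f_derive; lra.
- by move=> z; rewrite in_itv /= => /andP[uz zy]; apply: is_derive_majorant; lra.
- by move=> z; rewrite in_itv /= => /andP[uz zy]; apply: abs_df_le_dmajorant; lra.
- exact: f_cont.
- exact: majorant_cont.
Qed.

(* Antiderivatives of [majorant - majorant u] and [majorant v - majorant]. *)
Definition left_prim y := `|df v| * (y - u) ^+ 2 / 2 + majorant_coef * y
  + majorant_coef * ((v - u) / (s + 2)) * weight (s + 2) y.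

Definition right_prim y := - (`|df v| * (v - y) ^+ 2 / 2)
  + - (majorant_coef * ((v - u) / (s + 2))) * weight (s + 2) y.

Let is_derive_weight2 y : y < v -> is_derive y 1 (weight (s + 2))
  (- ((s + 2) * weight (s + 1) y) / (v - u)).
Proof.
move=> yv; have := is_derive_affine_powR v (v - u) (s + 2) y h_gt0 yv.
by rewrite (_ : s + 2 - 1 = s + 1) //; ring.
Qed.

Let derivable_cont (g : R -> R) c d : (forall y, derivable g y 1) ->
  {within `[c, d], continuous g}.
Proof.
move=> dg; apply: continuous_subspaceT => y.
exact/differentiable_continuous/derivable1_diffP.
Qed.

Let H_cont_sub c d : u <= c -> d <= v -> {within `[c, d], continuous H}.
Proof. by move=> uc dv; apply: continuous_subspaceW H_cont; exact: subset_itv. Qed.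

Lemma trap_left_le y : u <= y -> y <= v ->
  `|H y - H u - f u * (y - u)| <= left_prim y - left_prim u.
Proof.
move=> uy yv; have uv' := uv.
rewrite (_ : H y - H u - f u * (y - u) =
  (H y + - f u * y) - (H u + - f u * u)); last by ring.
apply: (@ler_norm_increment _ (fun y => H y + - f u * y) left_prim
  (fun y => f y - f u) (fun y => majorant y - majorant u) u y uy).
- move=> z; rewrite in_itv /= => /andP[uz zy].
  have dH := H_derive z uz (lt_le_trans zy yv).
  by apply: is_derive_eq; rewrite /GRing.scale /= mulr1.
- move=> z; rewrite in_itv /= => /andP[uz zy].
  have dw := is_derive_weight2 z (lt_le_trans zy yv).
  rewrite /left_prim /majorant weight_left; apply: is_derive_eq.
  rewrite /GRing.scale /=; field.
  by rewrite (gt_eqF h_gt0) (gt_eqF s2_gt0).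
- move=> z; rewrite in_itv /= => /andP[uz zy]; apply: f_increment_left; lra.
- apply: within_continuousDZ; first exact: H_cont_sub.
  exact: derivable_cont.
- apply: within_continuousDZ; first exact: derivable_cont.
  apply: continuous_subspaceW (weight_continuous _ _ s2_gt0 uv).
  exact: subset_itv.
Qed.

Lemma trap_right_le y : u <= y -> y <= v ->
  `|H v - H y - f v * (v - y)| <= right_prim v - right_prim y.
Proof.
move=> uy yv; have uv' := uv.
rewrite (_ : H v - H y - f v * (v - y) =
  (H v + - f v * v) - (H y + - f v * y)); last by ring.
apply: (@ler_norm_increment _ (fun y => H y + - f v * y) right_prim
  (fun y => f y - f v) (fun y => majorant v - majorant y) y v yv).
- move=> z; rewrite in_itv /= => /andP[yz zv].
  have dH := H_derive z (le_lt_trans uy yz) zv.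
  by apply: is_derive_eq; rewrite /GRing.scale /= mulr1.
- move=> z; rewrite in_itv /= => /andP[yz zv].
  have dw := is_derive_weight2 z zv.
  rewrite /right_prim /majorant (weight_right _ s1_gt0); apply: is_derive_eq.
  rewrite /GRing.scale /=; field.
  by rewrite (gt_eqF h_gt0) (gt_eqF s2_gt0).
- move=> z; rewrite in_itv /= => /andP[yz zv]; apply: f_increment_right; lra.
- apply: within_continuousDZ; first exact: H_cont_sub.
  exact: derivable_cont.
- apply: within_continuousDZ; first exact: derivable_cont.
  apply: continuous_subspaceW (weight_continuous _ _ s2_gt0 uv).
  exact: subset_itv.
Qed.

Lemma weight_mid r : weight r ((u + v) / 2) = 2^-1 `^ r.
Proof. by rewrite /weight; congr (_ `^ _); field; rewrite (gt_eqF h_gt0). Qed.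

Lemma trap_segment_le :
  `|H v - H u - (f u + f v) / 2 * (v - u)| <=
    (v - u) ^+ 2 / 2 * (trap_const s * `|df u| + (2^-1 - trap_const s) * `|df v|).
Proof.
have uv' := uv; set m := (u + v) / 2.
have um : u <= m by rewrite /m; lra.
have mv : m <= v by rewrite /m; lra.
rewrite (_ : H v - H u - (f u + f v) / 2 * (v - u) =
    (H m - H u - f u * (m - u)) + (H v - H m - f v * (v - m)));
  last by rewrite /m; field.
apply: le_trans (ler_normD _ _) _.
apply: le_trans (lerD (trap_left_le _ um mv) (trap_right_le _ um mv)) _.
have half_pow : 2^-1 `^ (s + 2) = (2 `^ s * 4)^-1.
  apply: (@mulIf _ (2 `^ (s + 2))); first by rewrite gt_eqF // powR_gt0.
  rewrite -powRM ?invr_ge0 // mulVf ?pnatr_eq0 // powR1.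
  by rewrite powRD ?pnatr_eq0 ?implybT // (@powR_mulrn _ 2 2) // -natrX mulVf.
have pow_gt0 : 0 < 2 `^ s by rewrite powR_gt0.
rewrite /left_prim /right_prim !weight_mid weight_left weight_right // half_pow.
rewrite /trap_const /majorant_coef /m le_eqVlt; apply/orP; left; apply/eqP.
by field; rewrite (gt_eqF s1_gt0) (gt_eqF s2_gt0) (gt_eqF pow_gt0).
Qed.

Lemma trap_segment_le_scaled (C : R) : trap_const s <= C ->
  `|H v - H u - (f u + f v) / 2 * (v - u)| <=
    C * ((v - u) ^+ 2 / 2 * (`|df u| + `|df v|)).
Proof.
move=> KC; apply: le_trans trap_segment_le _.
have /andP[K4 K2] := trap_const_bounds s s_gt0 s_le1.
rewrite mulrCA ler_wpM2l ?divr_ge0 ?sqr_ge0 // mulrDr.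
by apply: lerD; apply: ler_wpM2r => //; lra.
Qed.

End TrapezoidSegment.

Section Partition.
Context {R : realType} {a b : R} {n : nat} {x : nat -> R}.
Hypothesis x_part : is_partition a b n x.

Lemma partition_le i j : (i <= j <= n)%N -> x i <= x j.
Proof.
case: x_part => _ [_ x_lt]; elim: j => [|j IH] /andP[ij jn].
  by move: ij; rewrite leqn0 => /eqP ->.
move: ij; rewrite leq_eqVlt => /orP[/eqP -> //|ij].
by apply: le_trans (IH _) (ltW (x_lt _ jn)); rewrite -ltnS ij ltnW.
Qed.

Lemma partition_itv k : (k <= n)%N -> a <= x k <= b.
Proof.
case: x_part => x0 [xn _] kn.
by rewrite -{1}x0 -xn !partition_le ?kn ?leqnn.
Qed.

Lemma trap_error_telescope (f : R -> R) :
  trap_error f a b n x = \sum_(k < n)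
    (parameterized_integral lebesgue_measure a (x k.+1) f
     - parameterized_integral lebesgue_measure a (x k) f
     - (f (x k) + f (x k.+1)) / 2 * (x k.+1 - x k)).
Proof.
case: x_part => x0 [xn _].
rewrite /trap_error sumrB -(big_mkord xpredT (fun k =>
  parameterized_integral lebesgue_measure a (x k.+1) f
  - parameterized_integral lebesgue_measure a (x k) f)).
rewrite telescope_sumr // x0 xn /parameterized_integral set_itv1 Rintegral_set1.
by rewrite subr0.
Qed.

End Partition.

Theorem proposition4 (R : realType) (s p q : R) (I : set R) (a b : R) (f : R -> R) :
  0 < s -> s <= 1 -> 1 < p -> q = p / (p - 1) ->
  is_interval I -> (interior I) a -> (interior I) b -> a < b ->
  (forall x, (interior I) x -> derivable f x 1) ->
  (@lebesgue_measure R).-integrable `[a, b] (EFin \o derive1 f) ->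
  s_convex_on s a b (fun x => `|derive1 f x|) ->
  forall (n : nat) (x : nat -> R), is_partition a b n x ->
  `|trap_error f a b n x| <=
    (2 `^ (p^-1))^-1
    * ((s * 2 `^ s + 1) / (2 `^ s * (s + 1) * (s + 2))) `^ (q^-1)
    * \sum_(k < n) (x k.+1 - x k) ^+ 2 / 2 * (`|derive1 f (x k)| + `|derive1 f (x k.+1)|).
Proof.
move=> s0 s1 p1 qE Ii Ia Ib ab fder _ cvx n x x_part.
have fd y : a <= y -> y <= b -> is_derive y 1 f (derive1 f y).
  move=> ay yb; rewrite derive1E; apply/derivableP/fder.
  by apply: (is_interval_interior Ii _ _ Ia Ib); rewrite ay yb.
have f_cont : {within `[a, b], continuous f}.
  apply: derivable_within_continuous => y; rewrite in_itv /= => /andP[ay yb].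
  by case: (fd y ay yb).
have fint : lebesgue_measure.-integrable `[a, b] (EFin \o f).
  by apply: continuous_compact_integrable => //; exact: segment_compact.
rewrite -/(trap_const s) trap_error_telescope // mulr_sumr.
apply: le_trans (ler_norm_sum _ _ _) _; apply: ler_sum => k _.
have /andP[au _] := partition_itv x_part _ (ltnW (ltn_ord k)).
have /andP[_ vb] := partition_itv x_part _ (ltn_ord k).
have uv : x k < x k.+1 by case: x_part => _ [_ ->].
apply: (@trap_segment_le_scaled R s (x k) (x k.+1) f (derive1 f)
  (fun z => parameterized_integral lebesgue_measure a z f) s0 s1 uv _ _ _ _ _
  (trap_const_le_coef _ _ _ s0 s1 p1 qE)).
- by move=> y uy yv; apply: fd; lra.
- move=> y uy yv; apply: is_derive_parameterized_integral fint _; try lra.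
  have [dfy _] : is_derive y 1 f (derive1 f y) by apply: fd; lra.
  exact/differentiable_continuous/derivable1_diffP.
- apply: continuous_subspaceW (parameterized_integral_continuous (ltW ab) fint).
  exact: subset_itv.
- move=> t t0 t1; apply: cvx; rewrite ?in_itv /= ?t0 ?t1 ?au ?vb //; lra.
Qed.
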